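(* Let $a\geq 3$ and $m\geq 2a^2-a+2$ be integers, and suppose $[C(m,a)]$ is colored with red and blue so that there is no monochromatic solution of $L(m,a)$ in $[C(m,a)]$, with both $a-2$ and $a-1$ red. Then all of $1,2,\dots,2a-2$ are red.
   Context: For integers $m\geq 3$, $a\geq 1$, $L(m,a)$ denotes the equation $x_1+x_2+\cdots+x_{m-1}=a x_m$. For a positive integer $n$, $[n]=\{1,\dots,n\}$. A solution of $L(m,a)$ in $[n]$ is an $m$-tuple $(x_1,\dots,x_m)\in[n]^m$ (entries not necessarily distinct) satisfying the equation; given a 2-coloring of $[n]$, it is monochromatic if all $x_i$ have the same color. $C(m,a)$ denotes $\left\lceil \frac{m-1}{a}\left\lceil \frac{m-1}{a}\right\rceil\right\rceil$. *)

From mathcomp Require Import all_boot.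
Set Implicit Arguments. Unset Strict Implicit. Unset Printing Implicit Defensive.

Definition ceil_div (p q : nat) : nat := (p + q - 1) %/ q.

(* C(m,a) = ceil((m-1)/a * ceil((m-1)/a)) = ceil((m-1)*ceil((m-1)/a) / a) *)
Definition Cma (m a : nat) : nat := ceil_div ((m - 1) * ceil_div (m - 1) a) a.

(* A solution of L(m,a) in [n]: an m-tuple (x_1,...,x_m), represented as
   x : nat -> nat with x_{k+1} = x k for k < m (values outside are ignored),
   entries in {1..n}, and x_1 + ... + x_{m-1} = a * x_m. *)
Definition is_solution (m a n : nat) (x : nat -> nat) : Prop :=
  (forall i, i < m -> 1 <= x i <= n) /\
  \sum_(0 <= i < m.-1) x i = a * x m.-1.

(* A 2-coloring of [n] is c : nat -> bool (only values on 1..n matter);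
   true = red, false = blue. *)
Definition monochromatic (m : nat) (c : nat -> bool) (x : nat -> nat) : Prop :=
  forall i j, i < m -> j < m -> c (x i) = c (x j).

Definition no_mono_solution (m a n : nat) (c : nat -> bool) : Prop :=
  forall x : nat -> nat, is_solution m a n x -> ~ monochromatic m c x.

From mathcomp Require Import all_boot zify.

Set Implicit Arguments.
Unset Strict Implicit.
Unset Printing Implicit Defensive.

(* Write k = m - 1 for the number of summands x_1, ..., x_k of L(m,a) and
   n = C(m,a).  Everything rests on one construction: if a*x can be written
   as a sum of k integers of [n] of the colour of x, we get a monochromatic
   solution.  Sums of integers drawn from an interval of one colour fill a
   whole interval ([colored_sum_interval]), so, in a colouring without
   monochromatic solutions,
   - a red interval [lo, hi] forces every w with a*w in the right range to be
     blue ([forced_color]); this produces long blue intervals;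
   - a blue number i together with a blue interval [L, U] forbids every blue
     x with a*x = (k-j)*i + (a sum of j elements of [L, U]) ([no_mixed_sum]);
     multiples of a hit every long interval ([multiple_in_interval]), so such
     an x exists and i cannot be blue.
   Applied with the red interval [lo, a-1] this shows that lo - 1 is red
   ([red_extends_down]), so by induction all of [1, a-1] is red; applied once
   more with two blue windows it shows that a, ..., 2a-2 are red
   ([red_extends_up]). *)

Lemma ceil_div_bounds p q : 0 < q -> p <= q * ceil_div p q < p + q.
Proof.
move=> q_gt0; rewrite /ceil_div.
have := divn_eq (p + q - 1) q; have := ltn_pmod (p + q - 1) q_gt0.
by move: ((p + q - 1) %/ q) ((p + q - 1) %% q) => d r; nia.
Qed.

Lemma multiple_in_interval a lo hi xL xU :
  0 < a -> lo + a <= hi.+1 -> xL <= xU -> a * xL <= hi -> lo <= a * xU ->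
  exists2 x, xL <= x <= xU & lo <= a * x <= hi.
Proof.
move=> a_gt0 long le_xLU low_xL high_xU.
have [ge_lo lt_lo] := andP (ceil_div_bounds lo a_gt0).
exists (maxn xL (ceil_div lo a)).
- apply/andP; split; first exact: leq_maxl.
  by rewrite geq_max le_xLU /= -ltnS -(ltn_pmul2l a_gt0) mulnS; lia.
- rewrite /maxn; case: ltnP => [_|le_ceil]; first lia.
  by have := leq_mul (leqnn a) le_ceil; lia.
Qed.

Lemma Cma_large a m : 0 < a -> 2 * a * a - a + 1 <= m.-1 -> 2 * m.-1 <= Cma m a.
Proof.
move=> a_gt0 large_k; rewrite /Cma subn1.
have [ge_q _] := andP (ceil_div_bounds m.-1 a_gt0).
have [ge_n _] := andP (ceil_div_bounds (m.-1 * ceil_div m.-1 a) a_gt0).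
have ge_2a : 2 * a <= ceil_div m.-1 a by nia.
nia.
Qed.

(* The numerical facts behind [red_extends_down], for k = s a + t with t < a:
   the window [lo (s+1), k-(s+1)] has a-multiples between k lo and k (a-1),
   and twice the window, shifted by (k-2)(lo-1), is long and reachable by
   a-multiples of its elements. *)
Lemma down_arith a k lo s t :
  3 <= a -> 2 * a * a - a + 1 <= k -> k = s * a + t -> t < a -> 2 <= lo <= a - 2 ->
  [/\ k * lo <= a * (lo * s.+1), a * (k - s.+1) <= k * (a - 1),
      2 * (lo * s.+1) + a <= (2 * (k - s.+1)).+1,
      a * (lo * s.+1) <= (k - 2) * (lo - 1) + 2 * (k - s.+1)
    & (k - 2) * (lo - 1) + 2 * (lo * s.+1) <= a * (k - s.+1)].
Proof.
move=> a_ge3 large_k Ek lt_t lo_in.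
have : 2 * a <= s.+1 by nia.
by split; nia.
Qed.

(* The numerical facts behind [red_extends_up], for k = s (a-1) + t with
   t < a-1 and a <= i <= 2a-2: the window [s+1, k-1] shifted by (k-1) i is
   long and reachable by a-multiples of elements of [k-a+1, 2(k-a+1)]. *)
Lemma up_arith a k s t i :
  3 <= a -> 2 * a * a - a + 1 <= k -> k = s * (a - 1) + t -> t < a - 1 ->
  a <= i <= 2 * a - 2 ->
  [/\ k <= (a - 1) * s.+1, s.+1 + a <= k,
      a * (k - a + 1) <= (k - 1) * i + (k - 1)
    & (k - 1) * i + s.+1 <= a * (2 * (k - a + 1))].
Proof.
move=> a_ge3 large_k Ek lt_t i_in.
have : 2 * s <= k by nia.
by split; nia.
Qed.

Section Colorings.
Variables (m a n : nat) (c : nat -> bool).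

Definition colored_sum (C : bool) (r T : nat) : Prop :=
  exists2 f : nat -> nat,
    (forall i, i < r -> 1 <= f i <= n /\ c (f i) = C) &
    \sum_(0 <= i < r) f i = T.

Lemma colored_sum0 C : colored_sum C 0 0.
Proof. by exists (fun _ => 0); rewrite ?big_geq. Qed.

Lemma colored_sum_add C r1 r2 T1 T2 :
  colored_sum C r1 T1 -> colored_sum C r2 T2 -> colored_sum C (r1 + r2) (T1 + T2).
Proof.
move=> [f1 col1 <-] [f2 col2 <-].
exists (fun i => if i < r1 then f1 i else f2 (i - r1)).
  move=> i lt_i; case: ifP => [/col1 //|/negbT]; rewrite -leqNgt => ge_i.
  by apply: col2; lia.
rewrite (@big_cat_nat _ _ _ r1) ?leq_addr //=; congr (_ + _).
  by apply: eq_big_nat => i /andP[_ ->].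
rewrite -{1}(add0n r1) big_addn addKn; apply: eq_big_nat => i _.
by rewrite addnK ltnNge leq_addl.
Qed.

Lemma colored_sum_const C r v : 1 <= v <= n -> c v = C -> colored_sum C r (r * v).
Proof.
by move=> v_in col_v; exists (fun _ => v); rewrite ?sum_nat_const_nat ?subn0.
Qed.

Lemma colored_sum_interval C lo hi r T :
  (forall v, lo <= v <= hi -> c v = C) -> 1 <= lo -> hi <= n ->
  r * lo <= T <= r * hi -> colored_sum C r T.
Proof.
move=> col lo_gt0 hi_le; elim: r T => [|r IH] T T_in.
  by rewrite (_ : T = 0); [exact: colored_sum0 | lia].
have le_lohi : lo <= hi by rewrite -(leq_pmul2l (ltn0Sn r)); lia.
have := leq_mul (leqnn r) le_lohi; rewrite mulSn mulSn in T_in => le_rlohi.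
pose v := maxn lo (T - r * hi).
have v_in : lo <= v <= hi by rewrite /v /maxn; case: ifP; lia.
have -> : T = (T - v) + 1 * v by rewrite /v /maxn; case: ifP; lia.
rewrite -addn1; apply: colored_sum_add.
  by apply: IH; rewrite /v /maxn; case: ifP; lia.
by apply: colored_sum_const; [lia | exact: col].
Qed.

Hypothesis no_mono : no_mono_solution m a n c.

Lemma no_colored_closure C x :
  0 < m -> 1 <= x <= n -> c x = C -> ~ colored_sum C m.-1 (a * x).
Proof.
move=> m_gt0 x_in col_x [f col_f sum_f].
pose sol i := if i < m.-1 then f i else x.
have col_sol i : i < m -> c (sol i) = C.
  by move=> _; rewrite /sol; case: ifP => [/col_f[] //|_].
apply: (no_mono (x := sol)).
  split; first by move=> i _; rewrite /sol; case: ifP => [/col_f[] //|_].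
  by rewrite /sol ltnn -sum_f; apply: eq_big_nat => i /andP[_ ->].
by move=> i j lt_i lt_j; rewrite !col_sol.
Qed.

Lemma no_mixed_sum C i x lo hi j :
  0 < m -> 1 <= i <= n -> c i = C -> 1 <= x <= n -> c x = C ->
  (forall v, lo <= v <= hi -> c v = C) -> 1 <= lo -> hi <= n -> j <= m.-1 ->
  (m.-1 - j) * i + j * lo <= a * x <= (m.-1 - j) * i + j * hi -> False.
Proof.
move=> m_gt0 i_in col_i x_in col_x col lo_gt0 hi_le le_j ax_in.
apply: (no_colored_closure m_gt0 x_in col_x).
suff S : colored_sum C (m.-1 - j + j) ((m.-1 - j) * i + (a * x - (m.-1 - j) * i)).
  by rewrite subnK // subnKC in S; [exact: S | lia].
apply: colored_sum_add; first exact: colored_sum_const.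
by apply: (colored_sum_interval col); lia.
Qed.

(* A monochromatic interval [lo, hi] forces the opposite colour on every w
   such that (a - j) * w is a sum of m - 1 - j elements of [lo, hi]: then
   a * w is j copies of w plus such a sum. *)
Lemma forced_color C lo hi j w :
  0 < m -> (forall v, lo <= v <= hi -> c v = C) -> 1 <= lo -> hi <= n ->
  j <= a -> j <= m.-1 -> 1 <= w <= n ->
  (m.-1 - j) * lo <= (a - j) * w <= (m.-1 - j) * hi -> c w = ~~ C.
Proof.
move=> m_gt0 col lo_gt0 hi_le le_ja le_jk w_in aw_in.
have split_aw : a * w = j * w + (a - j) * w by rewrite -mulnDl subnKC.
case col_w: (c w); case: C col aw_in => col aw_in //; exfalso;
  apply: (no_mixed_sum m_gt0 w_in col_w w_in col_w col lo_gt0 hi_le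
                       (leq_subr j m.-1));
  by rewrite subKn // split_aw; lia.
Qed.

Hypotheses (a_ge3 : 3 <= a) (large_k : 2 * a * a - a + 1 <= m.-1)
           (large_n : 2 * m.-1 <= n).

(* If [lo, a-1] is red and lo >= 2, then lo - 1 is red: with s = (m-1) / a the
   window [lo (s+1), m-1-(s+1)] is blue, and two of its elements plus m - 3
   copies of lo - 1 would make a times one of its elements. *)
Lemma red_extends_down lo :
  2 <= lo <= a - 2 -> (forall v, lo <= v <= a - 1 -> c v = true) ->
  c (lo - 1) = true.
Proof.
move=> lo_in red; move: (large_k) (large_n); set k := m.-1 => k_large n_large.
have [m_gt0 a_gt0] : 0 < m /\ 0 < a by lia.
have [s [t [Ek lt_t]]] : exists s t, k = s * a + t /\ t < a.
  by exists (k %/ a), (k %% a); split; [exact: divn_eq | exact: ltn_pmod].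
have [kL aU long reach_U reach_L] := down_arith a_ge3 k_large Ek lt_t lo_in.
set L := lo * s.+1 in kL long reach_U reach_L *.
set U := k - s.+1 in aU long reach_U reach_L *.
have L_gt0 : 0 < L by rewrite muln_gt0; lia.
have blue w : L <= w <= U -> c w = false.
  move=> /andP[ge_w le_w].
  have := leq_mul (leqnn a) ge_w; have := leq_mul (leqnn a) le_w => aw_U aw_L.
  by apply: (forced_color (j := 0) m_gt0 red); rewrite ?subn0; lia.
case col_i: (c (lo - 1)) => //; exfalso.
have long' : (k - 2) * (lo - 1) + 2 * L + a <= ((k - 2) * (lo - 1) + 2 * U).+1.
  by lia.
have [x x_in ax_in] :=
  multiple_in_interval a_gt0 long' (ltac:(lia) : L <= U) reach_U reach_L.
apply: (no_mixed_sum (j := 2) m_gt0 _ col_i _ (blue x x_in) blue); lia.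
Qed.

Lemma red_below_a :
  c (a - 2) = true -> c (a - 1) = true -> forall v, 1 <= v <= a - 1 -> c v = true.
Proof.
move=> red2 red1.
suff red_from d : d <= a - 3 -> forall v, a - 2 - d <= v <= a - 1 -> c v = true.
  by move=> v v_in; apply: (red_from (a - 3)); lia.
elim: d => [_ v v_in|d IH le_d v v_in].
  by have [->|->] : v = a - 2 \/ v = a - 1 by lia.
have [ge_v|lt_v] := leqP (a - 2 - d) v; first by apply: IH; lia.
have -> : v = a - 2 - d - 1 by lia.
by apply: red_extends_down => [|w w_in]; [lia | apply: IH; lia].
Qed.

(* If [1, a-1] is red, so is every i in [a, 2a-2]: with s = (m-1) / (a-1),
   the windows [s+1, m-2] and [m-a, 2(m-a)] are blue, and m - 2 copies of i
   plus an element of the first would make a times an element of the second. *)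
Lemma red_extends_up i :
  (forall v, 1 <= v <= a - 1 -> c v = true) -> a <= i <= 2 * a - 2 -> c i = true.
Proof.
move=> red i_in; move: (large_k) (large_n); set k := m.-1 => k_large n_large.
have [m_gt0 a_gt0] : 0 < m /\ 0 < a by lia.
have [s [t [Ek lt_t]]] : exists s t, k = s * (a - 1) + t /\ t < a - 1.
  exists (k %/ (a - 1)), (k %% (a - 1)).
  by split; [exact: divn_eq | apply: ltn_pmod; lia].
have [kL long reach_U reach_L] := up_arith a_ge3 k_large Ek lt_t i_in.
have blue_sum w : s.+1 <= w <= k - 1 -> c w = false.
  move=> /andP[ge_w le_w].
  have := leq_mul (leqnn (a - 1)) ge_w; have := leq_mul (leqnn (a - 1)) le_w.
  by move=> aw_U aw_L; apply: (forced_color (j := 1) m_gt0 red); lia.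
have blue_x w : k - a + 1 <= w <= 2 * (k - a + 1) -> c w = false.
  move=> /andP[ge_w le_w].
  have le_2 : 2 * (k - a + 1) <= (k - (a - 1)) * (a - 1).
    by rewrite mulnC leq_mul; lia.
  apply: (forced_color (j := a - 1) m_gt0 red); rewrite ?subKn; lia.
case col_i: (c i) => //; exfalso.
have long' : (k - 1) * i + s.+1 + a <= ((k - 1) * i + (k - 1)).+1 by lia.
have [x x_in ax_in] := multiple_in_interval a_gt0 long'
  (ltac:(lia) : k - a + 1 <= 2 * (k - a + 1)) reach_U reach_L.
apply: (no_mixed_sum (j := 1) m_gt0 _ col_i _ (blue_x x x_in) blue_sum); lia.
Qed.

End Colorings.

Theorem lemma8 (a m : nat) (c : nat -> bool) :
  3 <= a ->
  2 * a ^ 2 - a + 2 <= m ->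
  no_mono_solution m a (Cma m a) c ->
  c (a - 2) = true -> c (a - 1) = true ->
  forall i, 1 <= i <= 2 * a - 2 -> c i = true.
Proof.
move=> a_ge3 large_m no_mono red2 red1 i i_in.
have large_k : 2 * a * a - a + 1 <= m.-1 by move: large_m; rewrite expnS expn1; lia.
have large_n := Cma_large (ltnW (ltnW a_ge3)) large_k.
have red_low := red_below_a no_mono a_ge3 large_k large_n red2 red1.
have [le_i|lt_i] := leqP i (a - 1); first by apply: red_low; lia.
by apply: (red_extends_up no_mono a_ge3 large_k large_n red_low); lia.
Qed.
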